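(* Let $t$ be a positive integer, let $\overline{\mathcal{G}}_t$, $\overline{\mathcal{P}}_t$ and $\phi:\overline{\mathcal{G}}_t\to\overline{\mathcal{P}}_t$ be as described in the context, and let $\mu\in\overline{\mathcal{P}}_t$. (i) If $\ell(\mu)=m(\mu)$, then $\mu$ has exactly $2m(\mu)$ pre-images in $\overline{\mathcal{G}}_t$ under $\phi$; of these, exactly $m(\mu)$ have no overlined parts, and the other $m(\mu)$ have the first occurrence of the smallest part overlined. (ii) If $\ell(\mu)>m(\mu)$, then $\mu$ has exactly $2m(\mu)+1$ pre-images in $\overline{\mathcal{G}}_t$ under $\phi$; of these, exactly $m(\mu)+1$ have the same number of overlined parts as $\mu$, and the other $m(\mu)$ have exactly one more overlined part than $\mu$.
   Context: An overpartition is a partition (weakly decreasing sequence of positive integers) in which the first occurrence of each distinct part size may be overlined; an overlined part $\overline{a}$ has size $a$. $\ell(\lambda)$ is the number of parts of $\lambda$; for $\mu\in\overline{\mathcal{P}}_t$, $m(\mu)$ is the number of parts of $\mu$ equal to $t$. $\overline{\mathcal{G}}_t$ is the set of nonempty overpartitions whose largest and smallest parts differ by at most $t$, with the largest part not overlined whenever this difference is exactly $t$. $\overline{\mathcal{P}}_t$ is the set of nonempty overpartitions with all parts at most $t$ and no part equal to $t$ overlined. For $\pi=(\pi_1,\dots,\pi_\ell)\in\overline{\mathcal{G}}_t$, let $s=\lfloor \pi_\ell/t\rfloor$ and let $k$ be the positive integer with $\pi_k\ge (s+1)t>\pi_{k+1}$ if it exists, $k=0$ otherwise; then $\phi(\pi)$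 is the overpartition $(t,\dots,t,\ \pi_{k+1}-st,\dots,\pi_\ell-st,\ \pi_1-(s+1)t,\dots,\pi_k-(s+1)t)$ with exactly $s(\ell-k)+(s+1)k$ initial non-overlined parts equal to $t$, where each $\pi_i-st$ or $\pi_i-(s+1)t$ is overlined exactly when $\pi_i$ is, and all parts equal to $0$ are deleted. (This $\phi(\pi)$ lies in $\overline{\mathcal{P}}_t$.) *)

From mathcomp Require Import all_boot.
Set Implicit Arguments. Unset Strict Implicit. Unset Printing Implicit Defensive.

(* An overpartition is encoded as a list of parts (a, b) : nat * bool, listed in
   weakly decreasing order of size a; b = true means the part is overlined.
   Only the first occurrence of each distinct size may be overlined. *)
Definition opart := (nat * bool)%type.

Definition op_rel (x y : opart) : bool :=
  (y.1 <= x.1) && ((x.1 == y.1) ==> ~~ y.2).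

Definition is_overpartition (p : seq opart) : bool :=
  all (fun x => 0 < x.1) p && pairwise op_rel p.

Definition n_over (p : seq opart) : nat := count (fun x => x.2) p.

Definition mult_t (t : nat) (mu : seq opart) : nat := count (fun x => x.1 == t) mu.

Definition largest (p : seq opart) : nat := (head (0, false) p).1.
Definition smallest (p : seq opart) : nat := (last (0, false) p).1.

Definition in_Pt (t : nat) (mu : seq opart) : bool :=
  [&& is_overpartition mu, mu != [::],
      all (fun x => x.1 <= t) mu & all (fun x => (x.1 == t) ==> ~~ x.2) mu].

Definition in_Gt (t : nat) (p : seq opart) : bool :=
  [&& is_overpartition p, p != [::],
      largest p - smallest p <= t &
      (largest p - smallest p == t) ==> ~~ (head (0, false) p).2].

Definition phi (t : nat) (p : seq opart) : seq opart :=
  let s := smallest p %/ t in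
  let k := count (fun x => (s.+1) * t <= x.1) p in
  let l := size p in
  nseq (s * (l - k) + s.+1 * k) (t, false) ++
  filter (fun x => x.1 != 0)
    (map (fun x => (x.1 - s * t, x.2)) (drop k p) ++
     map (fun x => (x.1 - s.+1 * t, x.2)) (take k p)).

Definition smallest_overlined (p : seq opart) : bool :=
  has (fun x => (x.1 == smallest p) && x.2) p.

From mathcomp Require Import all_boot zify.

(* Let s be the smallest part of p in G_t divided by t, and k the number of
   parts of p that are at least (s+1)t.  Lowering the parts below (s+1)t by st
   and the others by (s+1)t, the latter moved to the back, yields a weakly
   decreasing residue sequence R of parts < t (zeros allowed), and phi p is
   t^(s|R|+k) followed by the nonzero residues.  Conversely every (s, k, R)
   with k < |R| glues back to an element of G_t, provided no part becomes 0.
   So if mu = t^m nu, a preimage with N parts has R = nu followed by N - |nu|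
   zero residues, of which only the first may be overlined, and s, k are the
   quotient and remainder of m by N; positivity is exactly N <= |nu| + m.
   Thus N = |nu| gives one preimage (if nu is nonempty), and each of the m
   values |nu| < N <= |nu| + m gives two, differing in one overline. *)

Lemma op_rel_geq x y : op_rel x y -> y.1 <= x.1.
Proof. by case/andP. Qed.

Lemma op_rel_trans : transitive op_rel.
Proof.
move=> [a b] [c d] [e f]; rewrite /op_rel /= => /andP[ca _] /andP[ec ef].
apply/andP; split; first lia.
by apply/implyP => /eqP ae; apply: (implyP ef); apply/eqP; lia.
Qed.

Lemma op_rel_leq_l {u v z} : u.1 <= v.1 -> op_rel u z -> op_rel v z.
Proof.
rewrite /op_rel => uv /andP[zu uz]; apply/andP; split; first lia.
by apply/implyP => /eqP vz; apply: (implyP uz); apply/eqP; lia.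
Qed.

Lemma pairwise_op_rel_head {x s y} : pairwise op_rel (x :: s) -> y \in s -> y.1 <= x.1.
Proof. by rewrite pairwise_cons => /andP[/allP xs _] /xs /op_rel_geq. Qed.

Lemma pairwise_op_rel_last {x s y} :
  pairwise op_rel (x :: s) -> y \in x :: s -> (last x s).1 <= y.1.
Proof.
elim: s x => [|z s IHs] x; first by move=> _; rewrite inE => /eqP->.
move=> xzs; rewrite inE => /predU1P[->|]; last first.
  by apply: IHs; move: xzs; rewrite pairwise_cons => /andP[].
exact: pairwise_op_rel_head xzs (mem_last z s).
Qed.

Lemma take_drop_count_geq c {p} : pairwise op_rel p ->
  all (fun x => c <= x.1) (take (count (fun x => c <= x.1) p) p) /\
  all (fun x => x.1 < c) (drop (count (fun x => c <= x.1) p) p).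
Proof.
elim: p => [|x p IHp] // x_p; have /andP[_ p_pw] := x_p.
have [c_le_x | x_lt_c] := leqP c x.1 => /=; first by rewrite c_le_x /= c_le_x; apply: IHp.
have p_lt_c y : y \in p -> y.1 < c by move/(pairwise_op_rel_head x_p); lia.
have -> : count (fun y => c <= y.1) p = 0.
  by apply/eqP; rewrite -leqn0 leqNgt -has_count; apply/hasP => -[y /p_lt_c] /=; lia.
by rewrite leqNgt x_lt_c /= x_lt_c; split=> //; apply/allP.
Qed.

Lemma pairwise_take_drop {T : Type} {r : rel T} n {s} : pairwise r s ->
  [/\ allrel r (take n s) (drop n s), pairwise r (take n s) & pairwise r (drop n s)].
Proof. by rewrite -{1}(cat_take_drop n s) pairwise_cat => /and3P. Qed.

Definition shift_part c (x : opart) : opart := (x.1 + c, x.2).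
Definition unshift_part c (x : opart) : opart := (x.1 - c, x.2).

Lemma shift_partK c : cancel (shift_part c) (unshift_part c).
Proof. by case=> a b; rewrite /unshift_part /= addnK. Qed.

Lemma map_unshift_shift c l : map (unshift_part c) (map (shift_part c) l) = l.
Proof. by rewrite -map_comp (eq_map (shift_partK c)) map_id. Qed.

Lemma map_shift_unshift c l : all (fun x => c <= x.1) l ->
  map (shift_part c) (map (unshift_part c) l) = l.
Proof.
move=> /allP l_ge_c; rewrite -map_comp -[RHS]map_id; apply/eq_in_map => -[a b] /l_ge_c.
by rewrite /shift_part /= => /subnK ->.
Qed.

Lemma shift_partD a b x : shift_part (a + b) x = shift_part a (shift_part b x).
Proof. by rewrite /shift_part /= [a + b]addnC addnA. Qed.

Lemma shift_partC a b x : shift_part a (shift_part b x) = shift_part b (shift_part a x).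
Proof. by rewrite -!shift_partD addnC. Qed.

Lemma op_rel_shift c x y : op_rel (shift_part c x) (shift_part c y) = op_rel x y.
Proof. by rewrite /op_rel /= leq_add2r eqn_add2r. Qed.

Lemma op_rel_unshift a b x y : a <= x.1 -> b <= y.1 ->
  op_rel (unshift_part a x) (unshift_part b y) = op_rel (shift_part b x) (shift_part a y).
Proof.
rewrite /op_rel /= => ax by_; congr (_ && (_ ==> _)); first lia.
by apply/eqP/eqP; lia.
Qed.

Lemma op_rel_shift_lt t x y : y.1 < t -> op_rel (shift_part t x) y.
Proof. by rewrite /op_rel /= => yt; apply/andP; split; [|apply/implyP]; lia. Qed.

Lemma pairwise_unshift c l : all (fun x => c <= x.1) l -> pairwise op_rel l ->
  pairwise op_rel (map (unshift_part c) l).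
Proof.
move=> l_ge_c; rewrite pairwise_map; apply: sub_in_pairwise l_ge_c.
by move=> x y /= cx cy; rewrite op_rel_unshift // op_rel_shift.
Qed.

Lemma pairwise_shift c l : pairwise op_rel (map (shift_part c) l) = pairwise op_rel l.
Proof. by rewrite pairwise_map; apply: eq_pairwise => x y; rewrite /= op_rel_shift. Qed.

Lemma in_GtE t p : in_Gt t p = [&& is_overpartition p, p != [::] &
  op_rel (shift_part t (last (0, false) p)) (head (0, false) p)].
Proof.
rewrite /in_Gt /largest /smallest; case: p => [|[a b] s]; rewrite ?andbF //=.
case: (boolP (is_overpartition _)) => //= /andP[_ abs].
have := pairwise_op_rel_last abs (mem_head (a, b) s); case: (last _ s) => c d /= ca.
by rewrite /op_rel /=; congr (_ && (_ ==> _)); [lia | apply/eqP/eqP; lia].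
Qed.

Lemma in_Gt_op_rel_shift {t p} {x y : opart} :
  in_Gt t p -> x \in p -> y \in p -> op_rel (shift_part t x) y.
Proof.
rewrite in_GtE; case: p => [|h q] // /and3P[/andP[_ hq] _ last_h] xp.
have hx : op_rel (shift_part t x) h.
  by apply: (op_rel_leq_l _ last_h); rewrite leq_add2r; apply: pairwise_op_rel_last hq xp.
rewrite inE => /predU1P[-> //|yq]; apply: op_rel_trans hx _.
by move: hq; rewrite pairwise_cons => /andP[/allP/(_ y yq)].
Qed.

(** * Inverting phi *)

Definition residue_seq t R := all (fun x => x.1 < t) R && pairwise op_rel R.

Definition phi_s t p := smallest p %/ t.
Definition phi_k t p := count (fun x => (phi_s t p).+1 * t <= x.1) p.
Definition phi_residue t p :=
  map (unshift_part (phi_s t p * t)) (drop (phi_k t p) p) ++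
  map (unshift_part ((phi_s t p).+1 * t)) (take (phi_k t p) p).

Lemma phiE t p : phi t p =
  nseq (phi_s t p * size p + phi_k t p) (t, false) ++
  filter (fun x => x.1 != 0) (phi_residue t p).
Proof.
have k_le_p : phi_k t p <= size p := count_size _ p.
suff <- : phi_s t p * (size p - phi_k t p) + (phi_s t p).+1 * phi_k t p =
          phi_s t p * size p + phi_k t p by [].
by rewrite mulSnr addnA -mulnDr subnK.
Qed.

(* The inverse of phi on G_t, once the data s and k that phi forgets are supplied. *)
Definition unphi t s k R :=
  map (shift_part (s.+1 * t)) (drop (size R - k) R) ++
  map (shift_part (s * t)) (take (size R - k) R).

Lemma size_unphi t s k R : size (unphi t s k R) = size R.
Proof. by rewrite /unphi size_cat !size_map addnC -size_cat cat_take_drop. Qed.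

Lemma n_over_unphi t s k R : n_over (unphi t s k R) = n_over R.
Proof. by rewrite /n_over /unphi count_cat !count_map addnC -count_cat cat_take_drop. Qed.

Lemma last_unphi t s {k R} : k < size R ->
  exists y ys, take (size R - k) R = y :: ys /\
    last (0, false) (unphi t s k R) = shift_part (s * t) (last y ys).
Proof.
move=> k_lt_R; case E: (take _ R) => [|y ys].
  by move/(congr1 size): E; rewrite size_take /=; case: ifP; lia.
by exists y, ys; rewrite /unphi E last_cat /= last_map.
Qed.

Section Unphi.
Variables (t s k : nat) (R : seq opart).
Hypotheses (t_gt0 : 0 < t) (R_res : residue_seq t R) (k_lt_R : k < size R).

Let R_lt_t (x : opart) : x \in R -> x.1 < t.
Proof. by case/andP: R_res => /allP/(_ x). Qed.

Lemma phi_s_unphi : phi_s t (unphi t s k R) = s.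
Proof.
rewrite /phi_s /smallest; have [y [ys [E ->]]] := last_unphi t s k_lt_R.
have y_lt_t : (last y ys).1 < t by apply/R_lt_t/(mem_take (n0 := size R - k)); rewrite E mem_last.
by rewrite /shift_part /= addnC divnMDl // divn_small ?addn0.
Qed.

Lemma phi_k_unphi : phi_k t (unphi t s k R) = k.
Proof.
rewrite /phi_k phi_s_unphi /unphi count_cat !count_map.
rewrite (eq_count (a2 := predT)) => [|x]; last by rewrite /= leq_addl.
rewrite count_predT (eq_in_count (a2 := pred0)) => [|x /mem_take/R_lt_t]; last first.
  by rewrite /= mulSnr; lia.
by rewrite count_pred0 size_drop addn0; lia.
Qed.

Lemma phi_residue_unphi : phi_residue t (unphi t s k R) = R.
Proof.
have size_high : size (map (shift_part (s.+1 * t)) (drop (size R - k) R)) = k.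
  by rewrite size_map size_drop; lia.
rewrite /phi_residue phi_s_unphi phi_k_unphi /unphi.
by rewrite drop_size_cat // take_size_cat // !map_unshift_shift cat_take_drop.
Qed.

Lemma phi_unphi :
  phi t (unphi t s k R) = nseq (s * size R + k) (t, false) ++ filter (fun x => x.1 != 0) R.
Proof. by rewrite phiE phi_s_unphi phi_k_unphi phi_residue_unphi size_unphi. Qed.

Lemma in_Gt_unphi : (0 < s) || all (fun x => 0 < x.1) (take (size R - k) R) ->
  in_Gt t (unphi t s k R).
Proof.
move=> low_pos; have R_pw : pairwise op_rel R by case/andP: R_res.
have [cross pw_low pw_high] := pairwise_take_drop (size R - k) R_pw.
rewrite in_GtE; apply/and3P; split.
- rewrite /is_overpartition /unphi all_cat !all_map pairwise_cat !pairwise_shift pw_low pw_high.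
  rewrite !andbT -andbA; apply/and3P; split.
  + by apply/allP => x _ /=; rewrite addn_gt0 muln_gt0 t_gt0 orbT.
  + case/orP: low_pos => [s_gt0 | /allP low_pos]; apply/allP => x x_low /=.
      by rewrite addn_gt0 muln_gt0 s_gt0 t_gt0 orbT.
    by rewrite addn_gt0 low_pos.
  + apply/allrelP => _ _ /mapP[x _ ->] /mapP[y y_low ->].
    rewrite mulSnr shift_partD op_rel_shift; apply: op_rel_shift_lt.
    exact: R_lt_t (mem_take y_low).
- by rewrite -size_eq0 size_unphi; lia.
have [y [ys [low ->]]] := last_unphi t s k_lt_R.
rewrite shift_partC; case high: (drop (size R - k) R) => [|z zs].
  rewrite /unphi high low /= op_rel_shift; apply: op_rel_shift_lt.
  by apply: R_lt_t (mem_take (n0 := size R - k) _); rewrite low mem_head.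
rewrite /unphi high /= mulSnr shift_partD !op_rel_shift.
by move/allrelP: cross; apply; rewrite ?low ?high ?mem_last ?mem_head.
Qed.

End Unphi.

Lemma in_Gt_unphi0_low {t k R} :
  in_Gt t (unphi t 0 k R) -> all (fun x => 0 < x.1) (take (size R - k) R).
Proof.
case/and4P=> /andP[+ _] _ _ _; rewrite /unphi all_cat !all_map => /andP[_ /allP low].
by apply/allP => x /low; rewrite /= mul0n addn0.
Qed.

Lemma in_Gt_smallest {t p} : in_Gt t p ->
  last (0, false) p \in p /\ forall x : opart, x \in p -> smallest p <= x.1 <= smallest p + t.
Proof.
move=> p_Gt; have := p_Gt; rewrite in_GtE; case: p p_Gt => [|h q] // p_Gt.
case/and3P=> /andP[_ hq] _ _; have l_in : last h q \in h :: q := mem_last h q.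
split=> // x x_in; rewrite /smallest /= (pairwise_op_rel_last hq x_in) /=.
by have /op_rel_geq := in_Gt_op_rel_shift p_Gt l_in x_in.
Qed.

Lemma size_phi_residue t p : size (phi_residue t p) = size p.
Proof. by rewrite /phi_residue size_cat !size_map addnC -size_cat cat_take_drop. Qed.

Lemma unphi_phi {t p} : 0 < t -> in_Gt t p ->
  [/\ unphi t (phi_s t p) (phi_k t p) (phi_residue t p) = p,
      phi_k t p < size p & residue_seq t (phi_residue t p)].
Proof.
move=> t_gt0 p_Gt; have [l_in p_range] := in_Gt_smallest p_Gt.
have p_pw : pairwise op_rel p by move: p_Gt; rewrite in_GtE => /and3P[/andP[]].
set s := phi_s t p; set k := phi_k t p; set a := smallest p in p_range.
have a_lo : s * t <= a := leq_divM a t.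
have a_hi : a < s.+1 * t := ltn_ceil a t_gt0.
have [/allP high /allP low] := take_drop_count_geq (s.+1 * t) p_pw; rewrite -/k in high low.
have high_ge : all (fun x => s.+1 * t <= x.1) (take k p) by apply/allP.
have low_ge : all (fun x => s * t <= x.1) (drop k p).
  by apply/allP => x /mem_drop/p_range/andP[ax _]; apply: leq_trans a_lo ax.
split.
- have size_low : size (phi_residue t p) - k = size (map (unshift_part (s * t)) (drop k p)).
    by rewrite size_phi_residue size_map size_drop.
  rewrite /unphi size_low drop_size_cat // take_size_cat //.
  by rewrite !map_shift_unshift // cat_take_drop.
- rewrite -(count_predC (fun x => s.+1 * t <= x.1) p) -/k -{1}[k]addn0 ltn_add2l.
  by rewrite -has_count; apply/hasP; exists (last (0, false) p) => //=; rewrite -ltnNge.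
rewrite /residue_seq /phi_residue -/s -/k all_cat !all_map pairwise_cat.
have [cross pw_high pw_low] := pairwise_take_drop k p_pw.
rewrite !pairwise_unshift // !andbT -andbA; apply/and3P; split.
- by apply/allP => x /low /=; rewrite mulSnr; lia.
- apply/allP => x x_high /=; have /andP[_ x_le] := p_range x (mem_take x_high).
  by have := high x x_high; lia.
apply/allrelP => _ _ /mapP[x x_low ->] /mapP[y y_high ->].
rewrite op_rel_unshift ?(allP low_ge) ?(allP high_ge) // mulSnr shift_partD op_rel_shift.
exact: in_Gt_op_rel_shift p_Gt (mem_drop x_low) (mem_take y_high).
Qed.

(** * The preimages of mu *)

Lemma nseq_cat_inj {T : eqType} (x : T) a b X Y : x \notin X -> x \notin Y ->
  nseq a x ++ X = nseq b x ++ Y -> a = b /\ X = Y.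
Proof.
move=> xX xY; elim: a b => [|a IHa] [|b] //= E.
- by rewrite E mem_head in xX.
- by rewrite -E mem_head in xY.
- by case: E => /IHa[-> ->].
Qed.

Definition small_parts t mu := drop (mult_t t mu) mu.

Lemma in_Pt_split {t mu} : in_Pt t mu ->
  [/\ mu = nseq (mult_t t mu) (t, false) ++ small_parts t mu,
      all (fun x => 0 < x.1) (small_parts t mu) & residue_seq t (small_parts t mu)].
Proof.
case/and4P=> /andP[mu_pos mu_pw] _ /allP mu_le /allP t_not_over.
have count_t : count (fun x => t <= x.1) mu = mult_t t mu.
  by apply: eq_in_count => x /mu_le x_le; rewrite /= eqn_leq x_le.
have [] := take_drop_count_geq t mu_pw; rewrite count_t => /allP high low.
have [_ _ pw_low] := pairwise_take_drop (mult_t t mu) mu_pw.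
split; last by rewrite /residue_seq low pw_low.
- rewrite -{1}(cat_take_drop (mult_t t mu) mu); congr (_ ++ _).
  have size_high : size (take (mult_t t mu) mu) = mult_t t mu.
    by rewrite size_take_min; apply/minn_idPl/count_size.
  rewrite -{2}size_high; apply/all_pred1P/allP => -[a b] ab_high.
  have ab_mu := mem_take ab_high; have /= := high _ ab_high.
  have /= := mu_le _ ab_mu; have /= := t_not_over _ ab_mu.
  move=> /implyP b_t a_le t_le; have a_t : a = t by lia.
  by move: b_t; rewrite a_t eqxx => /(_ isT)/negPf->.
- by apply/allP => x /mem_drop; apply: (allP mu_pos).
Qed.

Definition zeros n b : seq opart := if n is n'.+1 then (0, b) :: nseq n' (0, false) else [::].

Lemma size_zeros n b : size (zeros n b) = n.
Proof. by case: n => //= n; rewrite size_nseq. Qed.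

Lemma zeros_fst {n b} {x : opart} : x \in zeros n b -> x.1 = 0.
Proof. by case: n => //= n; rewrite inE => /predU1P[-> | /nseqP[-> _]]. Qed.

Lemma filter_zeros n b : filter (fun x => x.1 != 0) (zeros n b) = [::].
Proof. by case: n => //= n; rewrite filter_nseq. Qed.

Lemma n_over_cat p q : n_over (p ++ q) = n_over p + n_over q.
Proof. exact: count_cat. Qed.

Lemma n_over_zeros n b : n_over (zeros n b) = b && (0 < n).
Proof. by case: n => [|n]; rewrite /n_over /= ?count_nseq ?mul0n ?addn0 ?andbT ?andbF. Qed.

Lemma pairwise_zeros n b : pairwise op_rel (zeros n b).
Proof.
case: n => // n; rewrite /zeros pairwise_cons all_nseq orbT /=.
by elim: n => // n IHn; rewrite [nseq _ _]/= pairwise_cons all_nseq orbT IHn.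
Qed.

Lemma residue_split {R} : pairwise op_rel R ->
  exists b n, R = filter (fun x => x.1 != 0) R ++ zeros n b.
Proof.
elim: R => [|[a b] R IHR] abR; first by exists false, 0.
move: abR; rewrite pairwise_cons => /andP[/allP abR R_pw].
have [a0 | a_ne0] := eqVneq a 0; last first.
  by have [b' [n R_eq]] := IHR R_pw; exists b', n; rewrite /= a_ne0 {1}R_eq.
have /all_pred1P R_eq : all (pred1 (0, false)) R.
  by apply/allP => -[c d] /abR; rewrite /op_rel a0 /=; case: c; case: d.
by exists b, (size R).+1; rewrite R_eq size_nseq a0 /= filter_nseq.
Qed.

(* For s = 0, a zero residue among the first size R - k would be a part equal to 0. *)
Lemma zeros_le_unphi t s k X n b : in_Gt t (unphi t s k (X ++ zeros n b)) ->
  n <= s * (size X + n) + k.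
Proof.
move=> p_Gt; rewrite leqNgt; apply/negP => n_big.
have s0 : s = 0 by case: s n_big {p_Gt} => // s; rewrite mulSn; lia.
rewrite s0 mul0n add0n in n_big; rewrite s0 in p_Gt.
have /allP low_pos := in_Gt_unphi0_low p_Gt.
have size_R : size (X ++ zeros n b) = size X + n by rewrite size_cat size_zeros.
have X_low : size X < size (X ++ zeros n b) - k by rewrite size_R; lia.
have X_take : size X < size (take (size (X ++ zeros n b) - k) (X ++ zeros n b)).
  by rewrite size_take_min; lia.
have := low_pos _ (mem_nth (0, false) X_take); rewrite nth_take //.
by rewrite nth_cat ltnn subnn (zeros_fst (mem_nth _ _)) // size_zeros; lia.
Qed.

Lemma smallest_overlined_unphi_zeros t s k N b : k < N ->
  smallest_overlined (unphi t s k (zeros N b)) = b.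
Proof.
move=> k_lt; have k_lt' : k < size (zeros N b) by rewrite size_zeros.
case: b k_lt' => k_lt'; last first.
  apply/negbTE/hasP => -[x x_in /andP[_ x_over]].
  suff : 0 < n_over (unphi t s k (zeros N false)) by rewrite n_over_unphi n_over_zeros.
  by rewrite /n_over -has_count; apply/hasP; exists x.
have [y [ys [low last_eq]]] := last_unphi t s k_lt'.
have y_eq : y = (0, true).
  by move: low; case: (N) k_lt => // n k_lt; rewrite size_zeros subSn //= => -[<-].
apply/hasP; exists (shift_part (s * t) y).
  by rewrite /unphi mem_cat map_f ?orbT // low mem_head.
have /mem_take/zeros_fst last0 : last y ys \in take (size (zeros N true) - k) (zeros N true).
  by rewrite low mem_last.
by rewrite /smallest last_eq /shift_part /= last0 y_eq /= eqxx.
Qed.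

(* With N = size p, phi t p = mu forces mult_t t mu = s * N + k with k < N;
   the flag b is the overline of the first zero residue. *)
Definition preimage t mu N b :=
  unphi t (mult_t t mu %/ N) (mult_t t mu %% N)
    (small_parts t mu ++ zeros (N - size (small_parts t mu)) b).

(* For N = size (small_parts t mu) there are no zero residues, so both flags give
   the same preimage. *)
Definition preimages t mu :=
  let r := size (small_parts t mu) in
  nseq (0 < r) (preimage t mu r false) ++
  [seq preimage t mu N false | N <- iota r.+1 (mult_t t mu)] ++
  [seq preimage t mu N true | N <- iota r.+1 (mult_t t mu)].

Lemma count_preimages t mu (a : pred (seq opart)) (f : bool -> bool) :
  let r := size (small_parts t mu) in
  (forall N b, r < N <= r + mult_t t mu -> a (preimage t mu N b) = f b) ->
  count a (preimages t mu) =
  (0 < r) && a (preimage t mu r false) + (f false + f true) * mult_t t mu.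
Proof.
move=> r a_f; rewrite !count_cat count_nseq mulnb andbC !count_map mulnDl.
have count_b b :
    count (preim (preimage t mu ^~ b) a) (iota r.+1 (mult_t t mu)) = f b * mult_t t mu.
  rewrite (eq_in_count (a2 := fun=> f b)) => [|N]; last first.
    by rewrite mem_iota => N_in; apply: a_f; lia.
  by case: (f b); rewrite ?count_predT ?count_pred0 ?size_iota ?mul1n.
by rewrite !count_b.
Qed.

Section Preimages.
Variables (t : nat) (mu : seq opart).
Hypotheses (t_gt0 : 0 < t) (mu_Pt : in_Pt t mu).
Local Notation m := (mult_t t mu).
Local Notation nu := (small_parts t mu).

Lemma size_preimage N b : size nu <= N -> size (preimage t mu N b) = N.
Proof. by move=> nu_le_N; rewrite size_unphi size_cat size_zeros subnKC. Qed.

Lemma n_over_preimage N b : n_over (preimage t mu N b) = n_over nu + (b && (size nu < N)).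
Proof. by rewrite n_over_unphi n_over_cat n_over_zeros subn_gt0. Qed.

Lemma residue_seq_small_parts_zeros N b : residue_seq t (nu ++ zeros N b).
Proof.
have [_ nu_pos /andP[nu_lt nu_pw]] := in_Pt_split mu_Pt.
rewrite /residue_seq all_cat nu_lt pairwise_cat nu_pw pairwise_zeros !andbT /=.
apply/andP; split; first by apply/allP => x /zeros_fst ->.
apply/allrelP => x y x_nu /zeros_fst y0.
by rewrite /op_rel y0 (gtn_eqF (allP nu_pos x x_nu)).
Qed.

Lemma preimage_correct N b : 0 < N -> size nu <= N <= size nu + m ->
  in_Gt t (preimage t mu N b) /\ phi t (preimage t mu N b) = mu.
Proof.
move=> N_gt0 /andP[nu_le_N N_le]; have [mu_eq nu_pos _] := in_Pt_split mu_Pt.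
have R_res := residue_seq_small_parts_zeros (N - size nu) b.
have size_R : size (nu ++ zeros (N - size nu) b) = N by rewrite size_cat size_zeros subnKC.
have k_lt : m %% N < size (nu ++ zeros (N - size nu) b) by rewrite size_R ltn_pmod.
split; last first.
  rewrite /preimage phi_unphi // size_R -divn_eq filter_cat filter_zeros cats0.
  by rewrite {3}mu_eq; congr (_ ++ _); apply/all_filterP; apply: sub_all nu_pos => x; rewrite lt0n.
apply: in_Gt_unphi => //; rewrite lt0n; case: eqP => //= s0.
have m_lt_N : m < N by rewrite (divn_eq m N) s0 mul0n add0n ltn_pmod.
rewrite size_R modn_small // takel_cat; last by rewrite leq_subLR addnC.
by apply/allP => x /mem_take; apply: (allP nu_pos).
Qed.

Lemma preimage_complete {p} : in_Gt t p -> phi t p = mu ->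
  exists b, p = preimage t mu (size p) b /\ size nu <= size p <= size nu + m.
Proof.
move=> p_Gt phi_p; have [p_eq k_lt R_res] := unphi_phi t_gt0 p_Gt.
rewrite -(size_phi_residue t p) in k_lt *.
move: (phi_s t p) (phi_k t p) (phi_residue t p) p_eq k_lt R_res p_Gt phi_p.
move=> s k R <- k_lt R_res p_Gt phi_p.
have [mu_eq _ /andP[nu_lt _]] := in_Pt_split mu_Pt.
have t_notin X : all (fun x => x.1 < t) X -> (t, false) \notin X.
  by move=> /allP X_lt; apply/negP => /X_lt; rewrite ltnn.
have /andP[R_lt R_pw] := R_res.
have [m_eq nu_eq] : s * size R + k = m /\ filter (fun x => x.1 != 0) R = nu.
  apply: (nseq_cat_inj (t, false)); rewrite ?t_notin //; last first.
    by rewrite -phi_unphi // phi_p {1}mu_eq.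
  by apply/allP => x; rewrite mem_filter => /andP[_ /(allP R_lt)].
have [b [n R_eq]] := residue_split R_pw; rewrite nu_eq in R_eq.
have size_R : size R = size nu + n by rewrite R_eq size_cat size_zeros.
have n_le_m : n <= m by rewrite -m_eq size_R; apply: (@zeros_le_unphi t s k nu n b); rewrite -R_eq.
have [s_eq k_eq] : m %/ size R = s /\ m %% size R = k.
  by rewrite -m_eq divnMDl ?modnMDl ?divn_small ?modn_small ?addn0 //; lia.
exists b; rewrite /preimage s_eq k_eq size_R addKn -R_eq.
by split=> //; apply/andP; split; lia.
Qed.

Lemma size_small_parts : size mu = m + size nu.
Proof. by have [mu_eq _ _] := in_Pt_split mu_Pt; rewrite {1}mu_eq size_cat size_nseq. Qed.

Lemma n_over_small_parts : n_over mu = n_over nu.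
Proof.
have [mu_eq _ _] := in_Pt_split mu_Pt.
by rewrite {1}mu_eq n_over_cat /n_over count_nseq mul0n.
Qed.

Lemma n_over_preimage_gt N b : size nu < N -> n_over (preimage t mu N b) = n_over mu + b.
Proof. by move=> lt_N; rewrite n_over_preimage lt_N andbT n_over_small_parts. Qed.

Lemma n_over_preimage_nu b : n_over (preimage t mu (size nu) b) = n_over mu.
Proof. by rewrite n_over_preimage ltnn andbF addn0 n_over_small_parts. Qed.

Lemma smallest_overlined_preimage N b : nu = [::] -> 0 < N ->
  smallest_overlined (preimage t mu N b) = b.
Proof.
by move=> nu0 N_gt0; rewrite /preimage nu0 subn0 smallest_overlined_unphi_zeros ?ltn_pmod.
Qed.

Lemma eq_preimage N N' b b' : size nu < N -> size nu <= N' ->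
  (preimage t mu N b == preimage t mu N' b') = (N == N') && (b == b').
Proof.
move=> lt_N le_N'; apply/eqP/andP => [E | [/eqP-> /eqP->] //].
have N_eq : N = N' by rewrite -(size_preimage _ b (ltnW lt_N)) E size_preimage.
move/(congr1 n_over): E; rewrite !n_over_preimage_gt -?N_eq // => /addnI.
by rewrite N_eq eqxx; case: b; case: b'.
Qed.

Lemma mem_preimages (p : seq opart) : p \in preimages t mu <-> in_Gt t p /\ phi t p = mu.
Proof.
rewrite !mem_cat mem_nseq lt0b; split=> [|[p_Gt phi_p]].
  case/or3P=> [/andP[nu_gt0 /eqP->] | |].
    by apply: preimage_correct => //; rewrite leqnn leq_addr.
  1,2: move=> /mapP[N]; rewrite mem_iota => /andP[lt_N N_lt] ->.
  1,2: by apply: preimage_correct; [lia | apply/andP; split; lia].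
have [b [p_eq /andP[nu_le le_nu]]] := preimage_complete p_Gt phi_p.
have p_gt0 : 0 < size p by case/and4P: p_Gt => _; rewrite lt0n size_eq0.
case: (ltngtP (size nu) (size p)) => [lt_p | | eq_p]; last 2 first.
- by rewrite ltnNge nu_le.
- have p_nu : p = preimage t mu (size nu) false by rewrite p_eq /preimage -eq_p subnn.
  by rewrite -p_nu eq_p p_gt0 eqxx.
have p_in : size p \in iota (size nu).+1 m by rewrite mem_iota; lia.
by case: b p_eq => ->; rewrite (map_f _ p_in) ?orbT.
Qed.

Lemma uniq_preimages : uniq (preimages t mu).
Proof.
have inj b : {in iota (size nu).+1 m &, injective (fun N => preimage t mu N b)}.
  move=> N N'; rewrite !mem_iota => /andP[lt_N _] /andP[lt_N' _] /eqP.
  by rewrite eq_preimage ?(ltnW lt_N') // => /andP[/eqP].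
rewrite cat_uniq; apply/and3P; split; first by case: (0 < _).
  apply/hasP => -[q]; rewrite mem_cat mem_nseq => /orP[] /mapP[N];
  by rewrite mem_iota => /andP[lt_N _] -> /andP[_]; rewrite eq_preimage // (gtn_eqF lt_N).
rewrite cat_uniq !map_inj_in_uniq ?iota_uniq ?andbT //.
apply/hasP => -[q] /mapP[N]; rewrite mem_iota => /andP[lt_N _] -> /mapP[N'].
by rewrite mem_iota => /andP[lt_N' _] /eqP; rewrite eq_preimage ?(ltnW lt_N') //= andbF.
Qed.

End Preimages.

Theorem mainTheorem5 (t : nat) (mu : seq opart) :
  0 < t -> in_Pt t mu ->
  exists L : seq (seq opart),
    uniq L /\ (forall p, p \in L <-> (in_Gt t p /\ phi t p = mu)) /\
    (size mu = mult_t t mu ->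
       [/\ size L = 2 * mult_t t mu,
           count (fun p => n_over p == 0) L = mult_t t mu &
           count smallest_overlined L = mult_t t mu]) /\
    (size mu > mult_t t mu ->
       [/\ size L = 2 * mult_t t mu + 1,
           count (fun p => n_over p == n_over mu) L = mult_t t mu + 1 &
           count (fun p => n_over p == (n_over mu).+1) L = mult_t t mu]).
Proof.
move=> t_gt0 mu_Pt; exists (preimages t mu).
split; first exact: uniq_preimages.
split; first exact: mem_preimages.
have size_mu := size_small_parts _ _ mu_Pt; have over_gt := n_over_preimage_gt _ _ mu_Pt.
split=> size_m; rewrite -count_predT.
  have nu0 : small_parts t mu = [::] by apply/size0nil; lia.
  have over0 : n_over mu = 0 by rewrite (n_over_small_parts _ _ mu_Pt) nu0.
  split.
  - by rewrite (count_preimages _ _ _ (fun=> true)) // nu0 /= add0n.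
  - rewrite (count_preimages _ _ _ negb) => [|N b /andP[lt_N _]]; first by rewrite nu0 /= mul1n.
    by rewrite over_gt // over0; case: b.
  - rewrite (count_preimages _ _ _ id) => [|N b /andP[lt_N _]]; first by rewrite nu0 /= mul1n.
    by rewrite smallest_overlined_preimage //; lia.
have nu_gt0 : 0 < size (small_parts t mu) by lia.
split.
- by rewrite (count_preimages _ _ _ (fun=> true)) // nu_gt0 addnC.
- rewrite (count_preimages _ _ _ negb) => [|N b /andP[lt_N _]].
    by rewrite nu_gt0 n_over_preimage_nu // eqxx /= mul1n addnC.
  by rewrite over_gt //; case: b; rewrite ?addn0 ?addn1 ?eqxx ?(gtn_eqF (ltnSn _)).
- rewrite (count_preimages _ _ _ id) => [|N b /andP[lt_N _]].
    by rewrite nu_gt0 n_over_preimage_nu // (ltn_eqF (ltnSn _)) /= mul1n.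
  by rewrite over_gt //; case: b; rewrite ?addn0 ?addn1 ?eqxx ?(ltn_eqF (ltnSn _)).
Qed.
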